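(* There exist continuous functions $f_1,f_2,f_3,f_4:\mathrm{SO}(3)\to\mathbb{R}^3$ such that for every rotation $R\in\mathrm{SO}(3)$, at least one of $\mathbf{R}_{xyz}(f_1(R))$, $\mathbf{R}_{xyz}(f_2(R))$, $\mathbf{R}_{xzy}(f_3(R))$, $\mathbf{R}_{xzy}(f_4(R))$ is equal to $R$.
   Context: Unit quaternions $w+x\mathbf{i}+y\mathbf{j}+z\mathbf{k}$ are identified with $(w,x,y,z)\in S^3$, and $\mathbf{R}_Q:S^3\to\mathrm{SO}(3)$ is $$\mathbf{R}_Q(w,x,y,z)=\begin{bmatrix}1-2y^2-2z^2 & 2(xy-zw) & 2(xz+yw)\\ 2(xy+zw) & 1-2x^2-2z^2 & 2(yz-xw)\\ 2(xz-yw) & 2(yz+xw) & 1-2x^2-2y^2\end{bmatrix}.$$ $\mathbf{R}_{xyz}(\alpha,\beta,\gamma)=\mathbf{R}_Q\big((\cos\frac{\gamma}{2}+\mathbf{k}\sin\frac{\gamma}{2})(\cos\frac{\beta}{2}+\mathbf{j}\sin\frac{\beta}{2})(\cos\frac{\alpha}{2}+\mathbf{i}\sin\frac{\alpha}{2})\big)$ and $\mathbf{R}_{xzy}(\alpha,\beta,\gamma)=\mathbf{R}_Q\big((\cos\frac{\gamma}{2}+\mathbf{j}\sin\frac{\gamma}{2})(\cos\frac{\beta}{2}+\mathbf{k}\sin\frac{\beta}{2})(\cos\frac{\alpha}{2}+\mathbf{i}\sin\frac{\alpha}{2})\big)$ (quaternion products) are the rotations given by extrinsic $x$-$y$-$z$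 and $x$-$z$-$y$ Euler angles respectively. *)

From HB Require Import structures.
From mathcomp Require Import all_boot all_order all_algebra.
From mathcomp Require Import all_classical all_reals all_analysis.
Set Implicit Arguments. Unset Strict Implicit. Unset Printing Implicit Defensive.
Import Order.TTheory GRing.Theory Num.Theory.
Import numFieldNormedType.Exports.
Local Open Scope ring_scope.

Section Defs.
Variable R : realType.

(* quaternion w + x i + y j + z k represented as (w, x, y, z) *)
Definition quat := (R * R * R * R)%type.

Definition qw (q : quat) : R := q.1.1.1.
Definition qx (q : quat) : R := q.1.1.2.
Definition qy (q : quat) : R := q.1.2.
Definition qz (q : quat) : R := q.2.

Definition qmul (p q : quat) : quat :=
  let: (a1, b1, c1, d1) := p in
  let: (a2, b2, c2, d2) := q in
  (a1*a2 - b1*b2 - c1*c2 - d1*d2,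
   a1*b2 + b1*a2 + c1*d2 - d1*c2,
   a1*c2 - b1*d2 + c1*a2 + d1*b2,
   a1*d2 + b1*c2 - c1*b2 + d1*a2).

Definition RQ (q : quat) : 'M[R]_3 :=
  let w := qw q in let x := qx q in let y := qy q in let z := qz q in
  \matrix_(i < 3, j < 3)
   nth 0 (nth [::]
   [:: [:: 1 - 2*y^+2 - 2*z^+2; 2*(x*y - z*w); 2*(x*z + y*w)];
       [:: 2*(x*y + z*w); 1 - 2*x^+2 - 2*z^+2; 2*(y*z - x*w)];
       [:: 2*(x*z - y*w); 2*(y*z + x*w); 1 - 2*x^+2 - 2*y^+2]] i) j.

Definition qi (t : R) : quat := (cos (t / 2), sin (t / 2), 0, 0).
Definition qj (t : R) : quat := (cos (t / 2), 0, sin (t / 2), 0).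
Definition qk (t : R) : quat := (cos (t / 2), 0, 0, sin (t / 2)).

Definition Rxyz (a b g : R) : 'M[R]_3 := RQ (qmul (qmul (qk g) (qj b)) (qi a)).
Definition Rxzy (a b g : R) : 'M[R]_3 := RQ (qmul (qmul (qj g) (qk b)) (qi a)).

Definition Rxyz_v (v : 'rV[R]_3) : 'M[R]_3 := Rxyz (v 0 0) (v 0 1) (v 0 2).
Definition Rxzy_v (v : 'rV[R]_3) : 'M[R]_3 := Rxzy (v 0 0) (v 0 1) (v 0 2).

Definition SO3 : set 'M[R]_3 := [set M | M^T *m M = 1%:M /\ \det M = 1].

End Defs.

From HB Require Import structures.
From mathcomp Require Import all_boot all_order all_algebra.
From mathcomp Require Import all_classical all_reals all_analysis.
From mathcomp Require Import ring lra.
Set Implicit Arguments. Unset Strict Implicit. Unset Printing Implicit Defensive.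
Import Order.TTheory GRing.Theory Num.Theory.
Import numFieldNormedType.Exports.
Local Open Scope ring_scope.
Local Open Scope classical_set_scope.

(* A rotation M = Rz(g) Ry(b) Rx(a) has first column
   (cos b cos g, cos b sin g, - sin b) and last row (- sin b, cos b sin a,
   cos b cos a); when cos b <> 0 these five entries determine M, the other four
   following from the cofactor identities of SO(3).  So g, b, a can be read off
   as polar angles of pairs of entries, and likewise for Ry(g) Rz(b) Rx(a) from
   the first column and the middle row.  The polar angle 2 atan (y / (r + x)) is
   continuous away from the ray x <= 0, and flooring its denominator makes it
   continuous everywhere without changing it where r + x is not small; adding pi
   gives the same for the ray x >= 0.  If (M00, M10) is not close to the negative
   axis the xyz chart applies, otherwise (M00, M20) is far from the positive axis
   and the xzy chart does; in both cases a is taken from whichever branch suits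
   the remaining pair of entries. *)

Section Matrix3.
Variable R : comRingType.

Definition mx3 (a00 a01 a02 a10 a11 a12 a20 a21 a22 : R) : 'M[R]_3 :=
  \matrix_(i < 3, j < 3)
   nth 0 (nth [::] [:: [:: a00; a01; a02]; [:: a10; a11; a12];
                       [:: a20; a21; a22]] i) j.

Lemma mx3_eta (M : 'M[R]_3) :
  M = mx3 (M 0 0) (M 0 1) (M 0 2) (M 1 0) (M 1 1) (M 1 2) (M 2 0) (M 2 1) (M 2 2).
Proof.
apply/matrixP => i j; rewrite mxE.
by case: i => [[|[|[|//]]] ?]; case: j => [[|[|[|//]]] ?]; congr (M _ _); apply/val_inj.
Qed.

Lemma mulmx_mx3 a00 a01 a02 a10 a11 a12 a20 a21 a22
                b00 b01 b02 b10 b11 b12 b20 b21 b22 :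
  mx3 a00 a01 a02 a10 a11 a12 a20 a21 a22 *m mx3 b00 b01 b02 b10 b11 b12 b20 b21 b22 =
  mx3 (a00 * b00 + a01 * b10 + a02 * b20) (a00 * b01 + a01 * b11 + a02 * b21)
      (a00 * b02 + a01 * b12 + a02 * b22) (a10 * b00 + a11 * b10 + a12 * b20)
      (a10 * b01 + a11 * b11 + a12 * b21) (a10 * b02 + a11 * b12 + a12 * b22)
      (a20 * b00 + a21 * b10 + a22 * b20) (a20 * b01 + a21 * b11 + a22 * b21)
      (a20 * b02 + a21 * b12 + a22 * b22).
Proof.
apply/matrixP => i j; rewrite !mxE !big_ord_recr big_ord0 /= add0r !mxE.
by case: i => [[|[|[|//]]] ?]; case: j => [[|[|[|//]]] ?].
Qed.

Lemma mulmx3E (A B : 'M[R]_3) i j :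
  (A *m B) i j = A i 0 * B 0 j + A i 1 * B 1 j + A i 2 * B 2 j.
Proof.
rewrite mxE !big_ord_recr big_ord0 /= add0r.
by congr (A _ _ * B _ _ + A _ _ * B _ _ + A _ _ * B _ _); apply/val_inj.
Qed.

Lemma det2E (A : 'M[R]_2) : \det A = A 0 0 * A 1 1 - A 0 1 * A 1 0.
Proof.
rewrite (expand_det_row _ 0) !big_ord_recr big_ord0 /= add0r /cofactor !det_mx11 !mxE /=.
rewrite !expr0 expr1 mul1r mulN1r mulrN.
by congr (A _ _ * A _ _ - A _ _ * A _ _); apply/val_inj.
Qed.

Lemma cofactor3E (M : 'M[R]_3) i j : cofactor M i j =
  M (i + 1) (j + 1) * M (i + 2) (j + 2) - M (i + 1) (j + 2) * M (i + 2) (j + 1).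
Proof.
(* Indexing through nat lets the ordinal arithmetic compute. *)
pose m (a b : nat) := M (inord a) (inord b).
have mE (k l : 'I_3) : M k l = m k l by rewrite /m !inord_val.
rewrite /cofactor det2E !mxE !mE; clearbody m.
by case: i => [[|[|[|//]]] ?]; case: j => [[|[|[|//]]] ?]; ring.
Qed.

End Matrix3.

Lemma orthogonal_cofactor (R : comUnitRingType) n (M : 'M[R]_n) i j :
  M^T *m M = 1%:M -> \det M = 1 -> M i j = cofactor M i j.
Proof.
move=> MtM detM; have adjM : \adj M = M^T.
  by rewrite -[\adj M]mulmx1 -(mulmx1C MtM) mulmxA mul_adj_mx detM mul1mx.
by move/matrixP: adjM => /(_ j i); rewrite !mxE => <-.
Qed.

Section Rotations.
Variable R : realType.
Implicit Types (M : 'M[R]_3) (a b g : R) (p q : quat R).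

Lemma SO3_unit_norms M : SO3 M ->
  [/\ M 0 0 ^+ 2 + M 1 0 ^+ 2 + M 2 0 ^+ 2 = 1,
      M 1 0 ^+ 2 + M 1 1 ^+ 2 + M 1 2 ^+ 2 = 1 &
      M 2 0 ^+ 2 + M 2 1 ^+ 2 + M 2 2 ^+ 2 = 1].
Proof.
move=> [MtM _]; have MMt := mulmx1C MtM.
split; [move: MtM => /matrixP/(_ 0 0) | move: MMt => /matrixP/(_ 1 1) |
        move: MMt => /matrixP/(_ 2 2)]; by rewrite mulmx3E !mxE -!expr2.
Qed.

Lemma SO3_cross M i j : SO3 M ->
  M i j = M (i + 1) (j + 1) * M (i + 2) (j + 2) - M (i + 1) (j + 2) * M (i + 2) (j + 1).
Proof. by move=> [MtM detM]; rewrite (orthogonal_cofactor _ _ MtM detM) cofactor3E. Qed.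

Lemma solve_sin_system (c s p q x y : R) : c ^+ 2 + s ^+ 2 = 1 -> c != 0 ->
  x + s * y = c ^+ 2 * p -> y + s * x = c ^+ 2 * q -> x = p - s * q /\ y = q - s * p.
Proof.
move=> cs c0; have c2 : c ^+ 2 = 1 - s ^+ 2 by rewrite -cs; ring.
have solve (x' y' p' q' : R) : x' + s * y' = c ^+ 2 * p' -> y' + s * x' = c ^+ 2 * q' ->
    x' = p' - s * q'.
  move=> hx hy; apply: (mulfI (expf_neq0 2 c0)).
  by rewrite mulrBr mulrCA -hx -hy c2; ring.
by move=> hx hy; split; [exact: solve hx hy | exact: solve hy hx].
Qed.

Lemma cos_half a : cos a = 1 - 2 * sin (a / 2) ^+ 2.
Proof. by rewrite {1}[a]splitr cosD -!expr2 cos2sin2; ring. Qed.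

Lemma sin_half a : sin a = 2 * sin (a / 2) * cos (a / 2).
Proof. by rewrite {1}[a]splitr sinD; ring. Qed.

Definition qnorm2 (q : quat R) := qw q ^+ 2 + qx q ^+ 2 + qy q ^+ 2 + qz q ^+ 2.

Lemma qnorm2_mul p q : qnorm2 (qmul p q) = qnorm2 p * qnorm2 q.
Proof. by case: p q => [[[? ?] ?] ?] [[[? ?] ?] ?]; rewrite /qnorm2 /qw /qx /qy /qz /=; ring. Qed.

Lemma qnorm2_qi a : qnorm2 (qi a) = 1.
Proof. by rewrite /qnorm2 /qw /qx /qy /qz /= -[RHS](cos2Dsin2 (a / 2)); ring. Qed.

Lemma qnorm2_qj a : qnorm2 (qj a) = 1.
Proof. by rewrite /qnorm2 /qw /qx /qy /qz /= -[RHS](cos2Dsin2 (a / 2)); ring. Qed.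

Lemma qnorm2_qk a : qnorm2 (qk a) = 1.
Proof. by rewrite /qnorm2 /qw /qx /qy /qz /= -[RHS](cos2Dsin2 (a / 2)); ring. Qed.

Lemma RQE q : RQ q =
  mx3 (1 - 2 * qy q ^+ 2 - 2 * qz q ^+ 2) (2 * (qx q * qy q - qz q * qw q))
      (2 * (qx q * qz q + qy q * qw q)) (2 * (qx q * qy q + qz q * qw q))
      (1 - 2 * qx q ^+ 2 - 2 * qz q ^+ 2) (2 * (qy q * qz q - qx q * qw q))
      (2 * (qx q * qz q - qy q * qw q)) (2 * (qy q * qz q + qx q * qw q))
      (1 - 2 * qx q ^+ 2 - 2 * qy q ^+ 2).
Proof. by []. Qed.

(* On unit quaternions RQ q is the matrix of v |-> q v conj(q); written in the
   homogeneous form RQ_hom, multiplicativity is a polynomial identity. *)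
Lemma RQ_mul p q : qnorm2 p = 1 -> qnorm2 q = 1 -> RQ (qmul p q) = RQ p *m RQ q.
Proof.
have RQ_hom r : qnorm2 r = 1 -> RQ r =
  mx3 (qw r ^+ 2 + qx r ^+ 2 - qy r ^+ 2 - qz r ^+ 2) (2 * (qx r * qy r - qz r * qw r))
      (2 * (qx r * qz r + qy r * qw r)) (2 * (qx r * qy r + qz r * qw r))
      (qw r ^+ 2 - qx r ^+ 2 + qy r ^+ 2 - qz r ^+ 2) (2 * (qy r * qz r - qx r * qw r))
      (2 * (qx r * qz r - qy r * qw r)) (2 * (qy r * qz r + qx r * qw r))
      (qw r ^+ 2 - qx r ^+ 2 - qy r ^+ 2 + qz r ^+ 2).
  by rewrite /qnorm2 RQE => r1; congr mx3; lra.
move=> p1 q1; rewrite !RQ_hom ?qnorm2_mul ?p1 ?q1 ?mulr1 // mulmx_mx3.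
by case: p q {p1 q1} => [[[? ?] ?] ?] [[[? ?] ?] ?]; rewrite /qw /qx /qy /qz /=; congr mx3; ring.
Qed.

Definition rotx a := mx3 1 0 0 0 (cos a) (- sin a) 0 (sin a) (cos a).
Definition roty a := mx3 (cos a) 0 (sin a) 0 1 0 (- sin a) 0 (cos a).
Definition rotz a := mx3 (cos a) (- sin a) 0 (sin a) (cos a) 0 0 0 1.

Lemma RQ_qi a : RQ (qi a) = rotx a.
Proof. by rewrite RQE /rotx (cos_half a) (sin_half a) /qw /qx /qy /qz /=; congr mx3; ring. Qed.

Lemma RQ_qj a : RQ (qj a) = roty a.
Proof. by rewrite RQE /roty (cos_half a) (sin_half a) /qw /qx /qy /qz /=; congr mx3; ring. Qed.

Lemma RQ_qk a : RQ (qk a) = rotz a.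
Proof. by rewrite RQE /rotz (cos_half a) (sin_half a) /qw /qx /qy /qz /=; congr mx3; ring. Qed.

Lemma Rxyz_rot a b g : Rxyz a b g = rotz g *m roty b *m rotx a.
Proof.
rewrite /Rxyz !RQ_mul ?RQ_qi ?RQ_qj ?RQ_qk //.
all: by rewrite ?qnorm2_mul ?qnorm2_qi ?qnorm2_qj ?qnorm2_qk ?mulr1.
Qed.

Lemma Rxzy_rot a b g : Rxzy a b g = roty g *m rotz b *m rotx a.
Proof.
rewrite /Rxzy !RQ_mul ?RQ_qi ?RQ_qj ?RQ_qk //.
all: by rewrite ?qnorm2_mul ?qnorm2_qi ?qnorm2_qj ?qnorm2_qk ?mulr1.
Qed.

Lemma SO3_Rxyz M a b g : SO3 M -> cos b != 0 ->
  M 0 0 = cos b * cos g -> M 1 0 = cos b * sin g -> M 2 0 = - sin b ->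
  M 2 1 = cos b * sin a -> M 2 2 = cos b * cos a -> Rxyz a b g = M.
Proof.
move=> SO3M cb h00 h10 h20 h21 h22.
have [c01 c12 c02 c11] : [/\ M 0 1 = M 1 2 * M 2 0 - M 1 0 * M 2 2,
    M 1 2 = M 2 0 * M 0 1 - M 2 1 * M 0 0, M 0 2 = M 1 0 * M 2 1 - M 1 1 * M 2 0
  & M 1 1 = M 2 2 * M 0 0 - M 2 0 * M 0 2].
  by split; rewrite [LHS](SO3_cross _ _ SO3M);
    congr (M _ _ * M _ _ - M _ _ * M _ _); apply/val_inj.
have cs : cos b ^+ 2 + (- sin b) ^+ 2 = 1 by rewrite sqrrN cos2Dsin2.
have h01 : M 0 1 + sin b * M 1 2 = cos b ^+ 2 * (- sin g * cos a).
  by rewrite c01 h20 h10 h22; ring.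
have h12 : M 1 2 + sin b * M 0 1 = cos b ^+ 2 * (- sin a * cos g).
  by rewrite c12 h20 h21 h00; ring.
have h02 : M 0 2 + - sin b * M 1 1 = cos b ^+ 2 * (sin g * sin a).
  by rewrite c02 h10 h21 h20; ring.
have h11 : M 1 1 + - sin b * M 0 2 = cos b ^+ 2 * (cos a * cos g).
  by rewrite c11 h22 h00 h20; ring.
have [e01 e12] := solve_sin_system (cos2Dsin2 b) cb h01 h12.
have [e02 e11] := solve_sin_system cs cb h02 h11.
rewrite Rxyz_rot [RHS]mx3_eta e01 e12 e02 e11 h00 h10 h20 h21 h22.
by rewrite /rotx /roty /rotz !mulmx_mx3; congr mx3; ring.
Qed.

Lemma SO3_Rxzy M a b g : SO3 M -> cos b != 0 ->
  M 0 0 = cos b * cos g -> M 1 0 = sin b -> M 2 0 = - (cos b * sin g) ->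
  M 1 1 = cos b * cos a -> M 1 2 = - (cos b * sin a) -> Rxzy a b g = M.
Proof.
move=> SO3M cb h00 h10 h20 h11 h12.
have [c01 c22 c02 c21] : [/\ M 0 1 = M 1 2 * M 2 0 - M 1 0 * M 2 2,
    M 2 2 = M 0 0 * M 1 1 - M 0 1 * M 1 0, M 0 2 = M 1 0 * M 2 1 - M 1 1 * M 2 0
  & M 2 1 = M 0 2 * M 1 0 - M 0 0 * M 1 2].
  by split; rewrite [LHS](SO3_cross _ _ SO3M);
    congr (M _ _ * M _ _ - M _ _ * M _ _); apply/val_inj.
have cs : cos b ^+ 2 + (- sin b) ^+ 2 = 1 by rewrite sqrrN cos2Dsin2.
have h01 : M 0 1 + sin b * M 2 2 = cos b ^+ 2 * (sin a * sin g).
  by rewrite c01 h12 h20 h10; ring.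
have h22 : M 2 2 + sin b * M 0 1 = cos b ^+ 2 * (cos g * cos a).
  by rewrite c22 h00 h11 h10; ring.
have h02 : M 0 2 + - sin b * M 2 1 = cos b ^+ 2 * (cos a * sin g).
  by rewrite c02 h10 h11 h20; ring.
have h21 : M 2 1 + - sin b * M 0 2 = cos b ^+ 2 * (cos g * sin a).
  by rewrite c21 h10 h00 h12; ring.
have [e01 e22] := solve_sin_system (cos2Dsin2 b) cb h01 h22.
have [e02 e21] := solve_sin_system cs cb h02 h21.
rewrite Rxzy_rot [RHS]mx3_eta e01 e22 e02 e21 h00 h10 h20 h11 h12.
by rewrite /rotx /roty /rotz !mulmx_mx3; congr mx3; ring.
Qed.

End Rotations.

Section PolarAngle.
Variable R : realType.
Implicit Types (e x y : R).

Definition hypot x y : R := Num.sqrt (x ^+ 2 + y ^+ 2).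

Lemma sqr_hypot x y : hypot x y ^+ 2 = x ^+ 2 + y ^+ 2.
Proof. by rewrite sqr_sqrtr // addr_ge0 ?sqr_ge0. Qed.

Lemma hypot_ge0 x y : 0 <= hypot x y.
Proof. exact: sqrtr_ge0. Qed.

Lemma hypot_bounds x y : - hypot x y <= x <= hypot x y.
Proof. by rewrite -ler_norml -sqrtr_sqr ler_sqrt ?lerDl ?sqr_ge0 // addr_ge0 ?sqr_ge0. Qed.

(* [hypot u v ^+ 2 + hypot u w ^+ 2 = 1 + u ^+ 2], so both cannot be small. *)
Lemma hypot_cover u v w : u ^+ 2 + v ^+ 2 + w ^+ 2 = 1 ->
  1 / 4 <= hypot u v + u \/ 1 / 4 <= hypot u w - u.
Proof.
move=> n1; have [|h] := lerP (1 / 4) (hypot u v + u); [by left | right].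
have /andP [_ uv] := hypot_bounds u v; have /andP [uw _] := hypot_bounds u w.
have := sqr_hypot u v; have := sqr_hypot u w.
have := hypot_ge0 u v; have := hypot_ge0 u w; nra.
Qed.

(* [2 atan (y / (hypot x y + x))] is the polar angle of [(x, y)] off the ray
   [x <= 0] (tangent half-angle formula); bounding the denominator below by
   [e > 0] makes it continuous everywhere without changing it where
   [hypot x y + x >= e]. *)
Definition polar_angle e x y : R := 2 * atan (y / Num.max (hypot x y + x) e).

Definition polar_angle_flip e x y : R := polar_angle e (- x) (- y) + pi.

Lemma polar_angleP e x y : 0 < e -> e <= hypot x y + x ->
  x = hypot x y * cos (polar_angle e x y) /\ y = hypot x y * sin (polar_angle e x y).
Proof.
rewrite /polar_angle; set r := hypot x y => e0 er.
rewrite (max_idPl er); set d := r + x; set u := y / d; set t := atan u.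
have d0 : d != 0 by rewrite gt_eqF // (lt_le_trans e0).
have u2 : 0 < 1 + u ^+ 2 by rewrite ltr_pwDl // sqr_ge0.
have st : sin t = u * cos t.
  by rewrite -[in RHS](atanK u) /tan divfK // cos_atan invr_eq0 gt_eqF // sqrtr_gt0.
have c2 : cos t ^+ 2 * (1 + u ^+ 2) = 1.
  by rewrite cos_atan exprVn sqr_sqrtr ?mulVf ?gt_eqF // ltW.
have y2 : y ^+ 2 = r ^+ 2 - x ^+ 2 by rewrite sqr_hypot; ring.
have e1 : (1 + u ^+ 2) * d = 2 * r by rewrite /u expr_div_n y2 /d; field.
have rc : 2 * r * cos t ^+ 2 = d.
  by rewrite -e1 mulrAC [(1 + _) * _]mulrC c2 mul1r.
rewrite (cos_half (2 * t)) (sin_half (2 * t)) (_ : 2 * t / 2 = t) ?st; last first.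
  by rewrite mulrC mulKf.
split.
  transitivity (r - 2 * r * cos t ^+ 2 * u ^+ 2); last by ring.
  by rewrite rc /u expr_div_n y2 /d; field.
transitivity (2 * r * cos t ^+ 2 * u); last by ring.
by rewrite rc /u mulrC divfK.
Qed.

Lemma polar_angle_flipP e x y : 0 < e -> e <= hypot x y - x ->
  x = hypot x y * cos (polar_angle_flip e x y) /\
  y = hypot x y * sin (polar_angle_flip e x y).
Proof.
have hN : hypot (- x) (- y) = hypot x y by rewrite /hypot !sqrrN.
move=> e0 er; have [] := polar_angleP e0 (_ : e <= hypot (- x) (- y) + - x).
  by rewrite hN.
rewrite /polar_angle_flip cosDpi sinDpi hN !mulrN => /eqP + /eqP.
by rewrite !eqr_oppLR => /eqP <- /eqP <-.
Qed.

Section Continuity.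
Variables (T : topologicalType) (f g : T -> R).
Hypotheses (cf : continuous f) (cg : continuous g).

Lemma continuous_hypot : continuous (fun t => hypot (f t) (g t)).
Proof.
move=> t; move: (@cf t) (@cg t) => cft cgt.
apply: (@continuous_comp _ _ _ (fun t => f t ^+ 2 + g t ^+ 2) (@Num.sqrt R)).
  by apply: continuousD; apply: continuousM.
exact: sqrt_continuous.
Qed.

Lemma continuous_polar_angle e : 0 < e -> continuous (fun t => polar_angle e (f t) (g t)).
Proof.
move=> e0 t; pose q t := g t / Num.max (hypot (f t) (g t) + f t) e.
apply: (@continuousM _ _ (fun=> 2) (atan \o q)); first exact: cst_continuous.
apply: continuous_comp; last exact: continuous_atan.
apply: continuousM; first exact: cg.
apply: continuousV; first by rewrite gt_eqF // lt_max e0 orbT.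
apply: continuous_max; last exact: cst_continuous.
by apply: continuousD; [exact: continuous_hypot | exact: cf].
Qed.

End Continuity.

Lemma continuous_polar_angle_flip (T : topologicalType) (f g : T -> R) e :
  0 < e -> continuous f -> continuous g ->
  continuous (fun t => polar_angle_flip e (f t) (g t)).
Proof.
move=> e0 cf cg; rewrite /polar_angle_flip.
have cN (h : T -> R) : continuous h -> continuous (fun t => - h t).
  by move=> ch s; apply: continuousN; exact: ch.
have cfg := continuous_polar_angle (cN _ cf) (cN _ cg) e0.
move=> t; apply: (@continuousD _ _ _ (fun t => polar_angle e (- f t) (- g t)) (fun=> pi)).
  exact: cfg.
exact: cst_continuous.
Qed.

End PolarAngle.

Lemma continuous_mx (T : topologicalType) (K : numFieldType) m n
    (f : T -> 'M[K]_(m, n)) :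
  (forall i j, continuous (fun t => f t i j)) -> continuous f.
Proof.
move=> fc x A /nbhs_ballP [e /= e0 eA].
have : \forall t \near x, forall i j, ball (f x i j) e (f t i j).
  apply: filter_forall => i; apply: filter_forall => j.
  exact: (fc i j x) (nbhsx_ballx _ _ e0).
by apply: filterS => t ht; apply: eA; split.
Qed.

Section EulerCharts.
Variable R : realType.
Implicit Types (M : 'M[R]_3) (a : R).

Definition row3 (a b c : R) : 'rV[R]_3 := \row_(j < 3) nth 0 [:: a; b; c] j.

Lemma continuous_row3 (T : topologicalType) (f g h : T -> R) :
  continuous f -> continuous g -> continuous h ->
  continuous (fun t => row3 (f t) (g t) (h t)).
Proof.
move=> cf cg ch; apply: continuous_mx => i j.
have -> : (fun t => row3 (f t) (g t) (h t) i j) = fun t => nth 0 [:: f t; g t; h t] j.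
  by apply/funext => t; rewrite mxE.
by case: j => [[|[|[|//]]] ?].
Qed.

Definition xyz_angles a M : 'rV[R]_3 :=
  row3 a (polar_angle 1 (hypot (M 0 0) (M 1 0)) (- M 2 0))
         (polar_angle (1 / 4) (M 0 0) (M 1 0)).

Definition xzy_angles a M : 'rV[R]_3 :=
  row3 a (polar_angle 1 (hypot (M 0 0) (M 2 0)) (M 1 0))
         (polar_angle_flip (1 / 4) (M 0 0) (- M 2 0)).

Lemma continuous_xyz_angles (alpha : 'M[R]_3 -> R) : continuous alpha ->
  continuous (fun M => xyz_angles (alpha M) M).
Proof.
have cE := @coord_continuous R 3 3.
move=> ca; apply: continuous_row3 => //; apply: continuous_polar_angle => //.
- exact: continuous_hypot.
- by move=> M; apply: continuousN; exact: cE.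
Qed.

Lemma continuous_xzy_angles (alpha : 'M[R]_3 -> R) : continuous alpha ->
  continuous (fun M => xzy_angles (alpha M) M).
Proof.
have cE := @coord_continuous R 3 3.
move=> ca; apply: continuous_row3 => //.
  by apply: continuous_polar_angle => //; exact: continuous_hypot.
by apply: continuous_polar_angle_flip => // M; apply: continuousN; exact: cE.
Qed.

Lemma SO3_hypot_row2 M : SO3 M -> hypot (M 2 2) (M 2 1) = hypot (M 0 0) (M 1 0).
Proof. by case/SO3_unit_norms => n0 _ n2; rewrite /hypot; congr Num.sqrt; lra. Qed.

Lemma SO3_hypot_row1 M : SO3 M -> hypot (M 1 1) (- M 1 2) = hypot (M 0 0) (M 2 0).
Proof. by case/SO3_unit_norms => n0 n1 _; rewrite /hypot sqrrN; congr Num.sqrt; lra. Qed.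

Lemma xyz_chart M a : SO3 M -> 1 / 4 <= hypot (M 0 0) (M 1 0) + M 0 0 ->
  M 2 2 = hypot (M 0 0) (M 1 0) * cos a -> M 2 1 = hypot (M 0 0) (M 1 0) * sin a ->
  Rxyz_v (xyz_angles a M) = M.
Proof.
move=> SO3M; set r := hypot (M 0 0) (M 1 0) => hg ha1 ha2.
have [n0 _ _] := SO3_unit_norms SO3M.
have q0 : 0 < 1 / 4 :> R by lra.
have [g1 g2] := polar_angleP q0 hg.
have hb : hypot r (- M 2 0) = 1 by rewrite /hypot sqrrN sqr_hypot n0 sqrtr1.
have hb1 : 1 <= hypot r (- M 2 0) + r by rewrite hb lerDl hypot_ge0.
have [b1 b2] := polar_angleP ltr01 hb1.
rewrite hb !mul1r in b1 b2.
have r0 : 0 < r by have /andP [_ ?] : - r <= M 0 0 <= r := hypot_bounds _ _; lra.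
rewrite /Rxyz_v /xyz_angles !mxE /= -/r; apply: SO3_Rxyz => //; rewrite -?b1 //.
- by rewrite gt_eqF.
- by rewrite -b2 opprK.
Qed.

Lemma xzy_chart M a : SO3 M -> 1 / 4 <= hypot (M 0 0) (M 2 0) - M 0 0 ->
  M 1 1 = hypot (M 0 0) (M 2 0) * cos a -> - M 1 2 = hypot (M 0 0) (M 2 0) * sin a ->
  Rxzy_v (xzy_angles a M) = M.
Proof.
move=> SO3M; set r := hypot (M 0 0) (M 2 0) => hg ha1 ha2.
have [n0 _ _] := SO3_unit_norms SO3M.
have hN : hypot (M 0 0) (- M 2 0) = r by rewrite /hypot /r sqrrN.
rewrite -hN in hg; have q0 : 0 < 1 / 4 :> R by lra.
have [g1 g2] := polar_angle_flipP q0 hg.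
rewrite hN in g1 g2.
have hb : hypot r (M 1 0) = 1 by rewrite /hypot sqr_hypot addrAC n0 sqrtr1.
have hb1 : 1 <= hypot r (M 1 0) + r by rewrite hb lerDl hypot_ge0.
have [b1 b2] := polar_angleP ltr01 hb1.
rewrite hb !mul1r in b1 b2.
have r0 : 0 < r by have /andP [? _] : - r <= M 0 0 <= r := hypot_bounds _ _; lra.
rewrite /Rxzy_v /xzy_angles !mxE /= -/r; apply: SO3_Rxzy => //; rewrite -?b1 //.
- by rewrite gt_eqF.
- by rewrite -g2 opprK.
- by rewrite -ha2 opprK.
Qed.

Lemma SO3_euler_cover M : SO3 M ->
  [\/ Rxyz_v (xyz_angles (polar_angle (1 / 8) (M 2 2) (M 2 1)) M) = M,
       Rxyz_v (xyz_angles (polar_angle_flip (1 / 8) (M 2 2) (M 2 1)) M) = M,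
       Rxzy_v (xzy_angles (polar_angle (1 / 8) (M 1 1) (- M 1 2)) M) = M |
       Rxzy_v (xzy_angles (polar_angle_flip (1 / 8) (M 1 1) (- M 1 2)) M) = M].
Proof.
move=> SO3M; have [n0 _ _] := SO3_unit_norms SO3M.
have e0 : 0 < 1 / 8 :> R by lra.
have [hx | hz] := hypot_cover n0.
- have r2 := SO3_hypot_row2 SO3M.
  have /andP [_ ?] : - hypot (M 0 0) (M 1 0) <= M 0 0 <= _ := hypot_bounds _ _.
  have [h | h] := lerP (1 / 8) (hypot (M 2 2) (M 2 1) + M 2 2).
    have [] := polar_angleP e0 h; rewrite r2 => h1 h2.
    by constructor 1; apply: xyz_chart.
  have h' : 1 / 8 <= hypot (M 2 2) (M 2 1) - M 2 2 by rewrite r2 in h *; lra.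
  have [] := polar_angle_flipP e0 h'; rewrite r2 => h1 h2.
  by constructor 2; apply: xyz_chart.
- have r1 := SO3_hypot_row1 SO3M.
  have /andP [? _] : - hypot (M 0 0) (M 2 0) <= M 0 0 <= _ := hypot_bounds _ _.
  have [h | h] := lerP (1 / 8) (hypot (M 1 1) (- M 1 2) + M 1 1).
    have [] := polar_angleP e0 h; rewrite r1 => h1 h2.
    by constructor 3; apply: xzy_chart.
  have h' : 1 / 8 <= hypot (M 1 1) (- M 1 2) - M 1 1 by rewrite r1 in h *; lra.
  have [] := polar_angle_flipP e0 h'; rewrite r1 => h1 h2.
  by constructor 4; apply: xzy_chart.
Qed.

End EulerCharts.

Theorem theorem8 (R : realType) :
  exists f1 f2 f3 f4 : 'M[R]_3 -> 'rV[R]_3,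
    [/\ {within @SO3 R, continuous f1}, {within @SO3 R, continuous f2},
        {within @SO3 R, continuous f3}, {within @SO3 R, continuous f4} &
        forall M : 'M[R]_3, @SO3 R M ->
          [\/ Rxyz_v (f1 M) = M, Rxyz_v (f2 M) = M,
              Rxzy_v (f3 M) = M | Rxzy_v (f4 M) = M]].
Proof.
have e0 : 0 < 1 / 8 :> R by lra.
have cE := @coord_continuous R 3 3.
have cNE i j : continuous (fun M : 'M[R]_3 => - M i j) by move=> M; apply: continuousN; exact: cE.
exists (fun M : 'M[R]_3 => xyz_angles (polar_angle (1 / 8) (M 2 2) (M 2 1)) M),
       (fun M : 'M[R]_3 => xyz_angles (polar_angle_flip (1 / 8) (M 2 2) (M 2 1)) M),
       (fun M : 'M[R]_3 => xzy_angles (polar_angle (1 / 8) (M 1 1) (- M 1 2)) M),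
       (fun M : 'M[R]_3 => xzy_angles (polar_angle_flip (1 / 8) (M 1 1) (- M 1 2)) M).
split; [| | | | exact: SO3_euler_cover]; apply: continuous_subspaceT.
- by apply/continuous_xyz_angles/continuous_polar_angle.
- by apply/continuous_xyz_angles/continuous_polar_angle_flip.
- by apply/continuous_xzy_angles/continuous_polar_angle.
- by apply/continuous_xzy_angles/continuous_polar_angle_flip.
Qed.
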